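(* Let $P,N>0$ and $L\in\mathbb{Z}_{\ge2}$. For each $n$ let $\mathcal{D}=\mathcal{D}_n$ be a probability distribution supported on $\mathcal{B}^n(\sqrt{nP})$, and let $x_1,\dots,x_L$ be i.i.d. with law $\mathcal{D}$. Suppose $E(P,N,L)$ and $\overline{E}(P,N,L)$ are real numbers with $$E(P,N,L)\le\lim_{n\to\infty}-\frac1n\ln\Pr\left[\mathrm{rad}^2(x_1,\dots,x_L)\le nN\right],\qquad \overline{E}(P,N,L)\le\lim_{n\to\infty}-\frac1n\ln\Pr\left[\overline{\mathrm{rad}}^2(x_1,\dots,x_L)\le nN\right].$$ Then $$C_{L-1}(P,N)\ge\frac{E(P,N,L)}{L-1},\qquad \overline{C}_{L-1}(P,N)\ge\frac{\overline{E}(P,N,L)}{L-1}.$$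
   Context: $\mathcal{B}^n(y,r)$ is the closed Euclidean ball of radius $r$ centered at $y$; $\mathcal{B}^n(r)=\mathcal{B}^n(0,r)$. For $x_1,\dots,x_L\in\mathbb{R}^n$: the squared Chebyshev radius is $\mathrm{rad}^2(x_1,\dots,x_L)=\min_{y\in\mathbb{R}^n}\max_i\|x_i-y\|_2^2$; the average squared radius is $\overline{\mathrm{rad}}^2(x_1,\dots,x_L)=\frac1L\sum_i\|x_i-\bar x\|_2^2$ with $\bar x=\frac1L\sum_ix_i$. A finite $\mathcal{C}\subseteq\mathcal{B}^n(\sqrt{nP})$ is $(P,N,L-1)$-list-decodable if $|\mathcal{C}\cap\mathcal{B}^n(y,\sqrt{nN})|\le L-1$ for all $y\in\mathbb{R}^n$ (equivalently every $L$ distinct points have $\mathrm{rad}^2>nN$), and $(P,N,L-1)$-average-radius list-decodable if every $L$ distinct points have $\overline{\mathrm{rad}}^2>nN$. Rate $R(\mathcal{C})=\frac1n\ln|\mathcal{C}|$. $C_{L-1}(P,N)$ (resp. $\overline{C}_{L-1}(P,N)$) is $\limsup_{n\to\infty}$ of the supremum of $R(\mathcal{C})$ over $(P,N,L-1)$-list-decodable (resp. average-radius list-decodable) codes $\mathcal{C}\subseteq\mathcal{B}^n(\sqrt{nP})$. *)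

(* R : realType, points of R^n as n.-tuple R
   (which carries the product sigma-algebra in mathcomp-analysis). *)
From HB Require Import structures.
From mathcomp Require Import all_boot all_order all_algebra.
From mathcomp Require Import all_classical all_reals all_analysis.
Set Implicit Arguments. Unset Strict Implicit. Unset Printing Implicit Defensive.
Import Order.TTheory GRing.Theory Num.Theory.
Local Open Scope classical_set_scope.
Local Open Scope ring_scope.

Section Defs.
Variable R : realType.

Definition sqdist (n : nat) (x y : n.-tuple R) : R :=
  \sum_(j < n) (tnth x j - tnth y j) ^+ 2.

Definition eball (n : nat) (y : n.-tuple R) (r : R) : set (n.-tuple R) :=
  [set x | sqdist x y <= r ^+ 2].

Definition origin (n : nat) : n.-tuple R := [tuple of nseq n 0].

Definition rad2 (n L : nat) (x : 'I_L -> n.-tuple R) : R :=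
  inf [set \big[Num.max/0]_(i < L) sqdist (x i) y | y in [set: n.-tuple R]].

Definition centroid (n L : nat) (x : 'I_L -> n.-tuple R) : n.-tuple R :=
  [tuple (L%:R^-1 * \sum_(i < L) tnth (x i) j) | j < n].

Definition avgrad2 (n L : nat) (x : 'I_L -> n.-tuple R) : R :=
  L%:R^-1 * \sum_(i < L) sqdist (x i) (centroid x).

(* finite codes are represented by duplicate-free sequences *)
Definition in_power_ball (n : nat) (P : R) (C : seq (n.-tuple R)) : Prop :=
  uniq C /\ forall x, x \in C -> eball (origin n) (Num.sqrt (n%:R * P)) x.

Definition list_decodable (n : nat) (P N : R) (L : nat) (C : seq (n.-tuple R)) : Prop :=
  in_power_ball P C /\
  forall y : n.-tuple R,
    (count (fun x => x \in eball y (Num.sqrt (n%:R * N))) C <= L - 1)%N.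

Definition avg_list_decodable (n : nat) (P N : R) (L : nat) (C : seq (n.-tuple R)) : Prop :=
  in_power_ball P C /\
  forall x : 'I_L -> n.-tuple R, injective x -> (forall i, x i \in C) ->
    n%:R * N < avgrad2 x.

Definition rate (n : nat) (C : seq (n.-tuple R)) : \bar R :=
  if size C == 0%N then -oo%E else ((n%:R)^-1 * ln (size C)%:R)%:E.

Definition Cap (P N : R) (L : nat) : \bar R :=
  limn_esup (fun n => ereal_sup [set rate C | C in [set C | @list_decodable n P N L C]]).

Definition Cap_avg (P N : R) (L : nat) : \bar R :=
  limn_esup (fun n => ereal_sup [set rate C | C in [set C | @avg_list_decodable n P N L C]]).

Definition expo (n : nat) (p : \bar R) : \bar R :=
  if fine p == 0 then +oo%E else (- ((n%:R)^-1 * ln (fine p)))%:E.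

Definition iid_with_law (d : measure_display) (Omega : measurableType d) (n L : nat)
  (Pr : probability Omega R) (D : probability (n.-tuple R) R)
  (X : 'I_L -> Omega -> n.-tuple R) : Prop :=
  (forall i, measurable_fun [set: Omega] (X i)) /\
  (forall i (A : set (n.-tuple R)), measurable A -> Pr (X i @^-1` A) = D A) /\
  (forall A : 'I_L -> set (n.-tuple R), (forall i, measurable (A i)) ->
     Pr (\bigcap_(i in [set: 'I_L]) (X i @^-1` A i)) = (\prod_(i < L) Pr (X i @^-1` A i))%E).

End Defs.

From HB Require Import structures.
From mathcomp Require Import all_boot all_order all_algebra.
From mathcomp Require Import all_classical all_reals all_analysis.
From mathcomp Require Import measurable_realfun ring lra.
Import Order.TTheory GRing.Theory Num.Theory.
Local Open Scope classical_set_scope.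
Local Open Scope ring_scope.
Set Implicit Arguments. Unset Strict Implicit.

(* Random coding with expurgation.  Draw M codewords i.i.d. from D.  Each of the
   at most M^L injective selections of L indices picks an L-tuple distributed as
   (x_1, ..., x_L), so some draw has at most M^L p "bad" selections, where p is
   the probability that (x_1, ..., x_L) has squared radius at most nN.  Delete
   the first index of every bad selection: the surviving codewords contain no
   bad injective L-tuple, and as constant L-tuples are bad no value survives
   more than L-1 times, so at least (M - M^L p)/(L-1) distinct codewords remain.
   With M of order p^(-1/(L-1)), i.e. about exp(n E/(L-1)), this is a code of
   rate close to E/(L-1).  Both radii are handled by the same argument. *)

(** * Selections and expurgation *)

Section selections.
Variables (T : Type) (M L : nat).

Definition tuple_select (s : 'I_L -> 'I_M) (y : M.-tuple T) : L.-tuple T :=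
  [tuple tnth y (s i) | i < L].

Definition injections : seq {ffun 'I_L -> 'I_M} :=
  [seq s : {ffun 'I_L -> 'I_M} <- enum {ffun 'I_L -> 'I_M} | injectiveb (fun i => s i)].

Lemma mem_injections (s : {ffun 'I_L -> 'I_M}) :
  (s \in injections) = injectiveb (fun i => s i).
Proof. by rewrite mem_filter mem_enum andbT. Qed.

Lemma size_injections : (size injections <= M ^ L)%N.
Proof.
rewrite size_filter (leq_trans (count_size _ _)) //.
by rewrite -cardE card_ffun !card_ord.
Qed.

Definition bad_selections (Bad : set (L.-tuple T)) (y : M.-tuple T) :=
  [seq s : {ffun 'I_L -> 'I_M} <- injections | tuple_select s y \in Bad].

End selections.

Lemma exists_injective_mem (V : eqType) (s : seq V) L :
  uniq s -> (L <= size s)%N -> exists2 f : 'I_L -> V, injective f & forall k, f k \in s.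
Proof.
case: s => [|x0 s] us Ls.
  have no_k (k : 'I_L) : False by move: (leq_trans (ltn_ord k) Ls).
  by exists (fun k => match no_k k with end) => [k|k]; case: (no_k k).
have lt_s (k : 'I_L) : (k < size (x0 :: s))%N by exact: leq_trans (ltn_ord k) Ls.
exists (fun k => nth x0 (x0 :: s) k) => [k1 k2 /eqP|k]; last exact: mem_nth.
by rewrite nth_uniq // => /eqP/val_inj.
Qed.

Lemma size_le_count_undup (V : eqType) (s : seq V) b :
  (forall v, count_mem v s <= b)%N -> (size s <= b * size (undup s))%N.
Proof.
move=> count_le; rewrite -sum1_size -(big_undup_iterop_count addn s xpredT (fun _ => 1%N)).
rewrite mulnC -sum1_size big_distrl /=; apply: leq_sum => v _.
by rewrite Monoid.iteropE iter_addn !mul1n addn0.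
Qed.

Section expurgation.
Variables (T : eqType) (M L : nat) (L0 : (0 < L)%N).
Variables (Bad : set (L.-tuple T)) (y : M.-tuple T).
Hypothesis Bad_const : forall v : T, Bad [tuple v | _ < L].

Definition removed := [seq s (Ordinal L0) | s : {ffun 'I_L -> 'I_M} <- bad_selections Bad y].

Definition kept := [seq i <- enum 'I_M | i \notin removed].

Definition expurgated := undup [seq tnth y i | i <- kept].

Lemma size_kept_ge : (M <= size kept + size (bad_selections Bad y))%N.
Proof.
apply: (@leq_trans (count (predC (mem removed)) (enum 'I_M) + count (mem removed) (enum 'I_M))).
  by rewrite addnC count_predC size_enum_ord.
rewrite /kept size_filter -(size_map (fun s : {ffun 'I_L -> 'I_M} => s (Ordinal L0))).
apply: leq_add => //; rewrite -size_filter.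
by apply: uniq_leq_size => [|i]; [exact/filter_uniq/enum_uniq|rewrite mem_filter => /andP[]].
Qed.

Lemma kept_select_not_bad (j : 'I_L -> 'I_M) :
  injective j -> (forall k, j k \in kept) -> ~ Bad (tuple_select j y).
Proof.
move=> j_inj j_kept j_bad; pose s := [ffun k => j k].
have s_bad : s \in bad_selections Bad y.
  rewrite mem_filter mem_injections; apply/andP; split; last first.
    by apply/injectiveP => k1 k2; rewrite !ffunE => /j_inj.
  rewrite (_ : tuple_select s y = tuple_select j y) ?mem_set //.
  by apply: eq_mktuple => k; rewrite ffunE.
have := j_kept (Ordinal L0); rewrite mem_filter => /andP[/negP not_removed _].
apply: not_removed.
by rewrite -[j _](ffunE (fun k => j k)); exact: map_f.
Qed.

Lemma expurgated_not_bad (x : 'I_L -> T) :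
  injective x -> (forall k, x k \in expurgated) -> ~ Bad [tuple x k | k < L].
Proof.
move=> x_inj x_exp.
have /choice[j j_kept] : forall k, exists i, i \in kept /\ x k = tnth y i.
  by move=> k; have := x_exp k; rewrite mem_undup => /mapP[i ? ->]; exists i.
have -> : [tuple x k | k < L] = tuple_select j y.
  by apply: eq_mktuple => k; rewrite (j_kept k).2.
apply: kept_select_not_bad => [k1 k2 jk|k]; last by case: (j_kept k).
by apply: x_inj; rewrite (j_kept k1).2 (j_kept k2).2 jk.
Qed.

(* A value repeated L times among the kept indices would yield a constant, hence
   bad, selection avoiding the removed indices. *)
Lemma size_kept_le : (size kept <= L.-1 * size expurgated)%N.
Proof.
rewrite -(size_map (tnth y)); apply: size_le_count_undup => v.
rewrite leqNgt; apply/negP => many_v.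
set J := [seq i <- kept | tnth y i == v].
have [j j_inj j_J] : exists2 j : 'I_L -> 'I_M, injective j & forall k, j k \in J.
  apply: exists_injective_mem; first exact/filter_uniq/filter_uniq/enum_uniq.
  by rewrite size_filter -(count_map _ (pred1 v)) -(prednK L0).
apply: (kept_select_not_bad j_inj) => [k|].
  by have := j_J k; rewrite mem_filter => /andP[].
suff -> : tuple_select j y = [tuple v | _ < L] by [].
by apply: eq_mktuple => k; have := j_J k; rewrite mem_filter => /andP[/eqP].
Qed.

End expurgation.

(** * Product probabilities on tuples *)

Section tuple_prob.
Context d (T : measurableType d) (R : realType) (D : probability T R).

Definition tuple_cons M (x : T * M.-tuple T) : M.+1.-tuple T := [tuple of x.1 :: x.2].

HB.instance Definition _ M := isMeasurableFun.Build _ _ _ _ (@tuple_cons M)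
  (measurable_cons measurable_fst measurable_snd).

Fixpoint tuple_prob M : probability (M.-tuple T) R :=
  if M is M'.+1 then distribution (D \x tuple_prob M')%E (@tuple_cons M')
  else \d_[tuple].

End tuple_prob.

Section boxes.
Context d (T : measurableType d) (K : nat).

Definition box (A : 'I_K -> set T) : set (K.-tuple T) :=
  [set y | forall i, A i (tnth y i)].

Definition boxes : set_system (K.-tuple T) :=
  [set box A | A in [set A | forall i, measurable (A i)]].

Lemma measurable_box (A : 'I_K -> set T) :
  (forall i, measurable (A i)) -> measurable (box A).
Proof.
move=> mA.
rewrite (_ : box A = \bigcap_(i in setT) ((fun y : K.-tuple T => tnth y i) @^-1` A i)).
  apply: fin_bigcap_measurable => [|i _]; first exact: finite_finset.
  by rewrite -[X in measurable X]setTI; exact: measurable_tnth.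
by apply/seteqP; split=> [y Ay i _|y Ay i]; exact: Ay.
Qed.

Lemma measurable_tupleE : @measurable _ (K.-tuple T) = <<s boxes >>.
Proof.
apply/seteqP; split; last first.
  apply: smallest_sub; first exact: sigma_algebra_measurable.
  by move=> _ [A mA <-]; exact: measurable_box.
apply: sub_sigma_algebra2; elim/big_ind: _ => // [X Y HX HY Z [/HX|/HY]//|i _].
move=> _ [B mB <-]; exists (fun j => if j == i then B else setT).
  by move=> j; case: ifP.
apply/seteqP; split=> [y /= Hy|y [_ /= By] j]; last by case: eqP => // ->.
by split=> //; have := Hy i; rewrite eqxx.
Qed.

Lemma tuple_prob_unique (R : realType) (P1 P2 : probability (K.-tuple T) R) :
  (forall A, (forall i, measurable (A i)) -> P1 (box A) = P2 (box A)) ->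
  forall S, measurable S -> P1 S = P2 S.
Proof.
move=> P12 S mS.
apply: (measure_unique boxes (fun _ => setT) measurable_tupleE _ _ _ P1 P2) => //.
- move=> _ _ [A mA <-] [B mB <-]; exists (fun i => A i `&` B i).
    by move=> i; exact: measurableI.
  rewrite predeqE => y; split=> [AB|[Ay By] i]; last by split.
  by split=> i; have [] := AB i.
- by move=> _; exists (fun _ => setT) => //; rewrite predeqE.
- by rewrite bigcup_const.
- by move=> _ [A mA <-]; exact: P12.
- by move=> _; apply: (le_lt_trans (probability_le1 _ _)); rewrite ?ltry.
Qed.

End boxes.

Section tuple_prob_theory.
Context d (T : measurableType d) (R : realType) (D : probability T R).

Lemma tuple_prob_box M (A : 'I_M -> set T) : (forall i, measurable (A i)) ->
  tuple_prob D M (box A) = (\prod_(i < M) D (A i))%E.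
Proof.
elim: M A => [|M IH] A mA.
  rewrite big_ord0 /= (_ : box A = setT) ?probability_setT //.
  by rewrite predeqE => y; split=> // _ [].
rewrite big_ord_recl /= (_ : _ @^-1` _ = A ord0 `*` box (fun i => A (lift ord0 i))).
  rewrite product_measure1E //; last exact: measurable_box.
  by congr (_ * _)%E; exact: IH.
rewrite predeqE => -[x t]; split=> [Ax|[/= Ax0 At] i].
  by split=> [|i]; [have := Ax ord0; rewrite tnth0|have := Ax (lift ord0 i); rewrite tnthS].
by case: (unliftP ord0 i) => [j ->|->]; rewrite ?tnth0 ?tnthS.
Qed.

Lemma measurable_tuple_select M L (s : 'I_L -> 'I_M) :
  measurable_fun setT (@tuple_select T M L s).
Proof.
apply/measurable_fun_tnthP => i.
rewrite (_ : _ \o _ = fun y : M.-tuple T => tnth y (s i)).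
  exact: measurable_tnth.
by apply/funext => y /=; rewrite tnth_mktuple.
Qed.

Lemma tuple_prob_select M L (s : 'I_L -> 'I_M) : injective s ->
  forall S, measurable S -> tuple_prob D M (tuple_select s @^-1` S) = tuple_prob D L S.
Proof.
move=> s_inj S mS; pose sel := mfun_Sub (mem_set (@measurable_tuple_select M L s)).
transitivity (distribution (tuple_prob D M) sel S) => //.
apply: (tuple_prob_unique _ mS) => A mA.
pose B j := if [pick i | s i == j] is Some i then A i else setT.
have mB j : measurable (B j) by rewrite /B; case: pickP.
rewrite /= /distribution /pushforward /= tuple_prob_box //.
rewrite (_ : _ @^-1` _ = box B) ?tuple_prob_box //; last first.
  rewrite predeqE => y; split=> [Ay j|By i].
    by rewrite /B; case: pickP => // i /eqP <-; have := Ay i; rewrite tnth_mktuple.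
  rewrite tnth_mktuple; have := By (s i); rewrite /B; case: pickP => [i' /eqP/s_inj ->//|].
  by move=> /(_ i); rewrite eqxx.
rewrite (partition_big s xpredT) //=; apply: eq_bigr => j _; rewrite /B.
case: pickP => [i /eqP sij|none]; last by rewrite big_pred0 ?probability_setT.
by rewrite (big_pred1 i) // => k /=; apply/eqP/eqP => [skj|->//]; apply: s_inj; rewrite skj.
Qed.

Lemma iid_tuple_law d' (Omega : measurableType d') (Pr : probability Omega R) L
    (X : 'I_L -> Omega -> T) :
  (forall i, measurable_fun setT (X i)) ->
  (forall i A, measurable A -> Pr (X i @^-1` A) = D A) ->
  (forall A : 'I_L -> set T, (forall i, measurable (A i)) ->
    Pr (\bigcap_(i in setT) X i @^-1` A i) = (\prod_(i < L) Pr (X i @^-1` A i))%E) ->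
  forall S, measurable S -> Pr ((fun w => [tuple X i w | i < L]) @^-1` S) = tuple_prob D L S.
Proof.
move=> mX lawX indepX.
have mXt : measurable_fun setT (fun w => [tuple X i w | i < L]).
  apply/measurable_fun_tnthP => i.
  by rewrite (_ : _ \o _ = X i) //; apply/funext => w /=; rewrite tnth_mktuple.
move=> S mS; transitivity (distribution Pr (mfun_Sub (mem_set mXt)) S) => //.
apply: (tuple_prob_unique _ mS) => A mA.
rewrite /= /distribution /pushforward /= tuple_prob_box //.
rewrite (_ : _ @^-1` _ = \bigcap_(i in setT) (X i @^-1` A i)).
  by rewrite indepX //; apply: eq_bigr => i _; exact: lawX.
by rewrite predeqE => w; split=> [Aw i _|Aw i]; have := Aw i; rewrite ?tnth_mktuple; apply.
Qed.

End tuple_prob_theory.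

(** * Random coding *)

Lemma exists_le_integral_nat d (T : measurableType d) (R : realType)
    (P : probability T R) (A : set T) (f : T -> nat) (c : R) :
  measurable A -> P A = 1%E -> measurable_fun A (fun x => (f x)%:R : R) ->
  (\int[P]_(x in A) ((f x)%:R)%:E <= c%:E)%E -> exists2 x, A x & (f x)%:R <= c.
Proof.
move=> mA PA1 mf intc; apply: contrapT => no_x.
have c0 : 0 <= c by rewrite -lee_fin (le_trans _ intc) // integral_ge0.
have f_ge x : A x -> ((Num.truncn c).+1 <= f x)%N.
  by move=> Ax; rewrite truncn_lt_nat // ltNge; apply/negP => fc; apply: no_x; exists x.
suff : ((Num.truncn c).+1%:R%:E <= c%:E)%E by rewrite lee_fin leNgt truncnS_gt.
apply: le_trans intc; rewrite -[leLHS]mule1 -PA1 -integral_cst //.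
apply: ge0_le_integral => //=.
- exact/measurable_EFinP.
- by move=> x Ax; rewrite lee_fin ler_nat f_ge.
Qed.

Section first_moment.
Context d (T : measurableType d) (R : realType) (D : probability T R) (M L : nat).

Lemma size_bad_selectionsE (Bad : set (L.-tuple T)) (y : M.-tuple T) :
  (size (bad_selections Bad y))%:R =
    \sum_(s <- injections M L) \1_(tuple_select s @^-1` Bad) y :> R.
Proof.
rewrite size_filter -sum1_count natr_sum big_mkcond /=.
apply: eq_bigr => s _; rewrite indicE.
by rewrite -[RHS]/((tuple_select s y \in Bad)%:R); case: (_ \in _).
Qed.

Lemma exists_few_bad_selections (Good : set T) (Bad : set (L.-tuple T)) :
  measurable Good -> D Good = 1%E -> measurable Bad ->
  exists2 y : M.-tuple T, (forall i, Good (tnth y i)) &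
    (size (bad_selections Bad y))%:R <= (size (injections M L))%:R * fine (tuple_prob D L Bad).
Proof.
move=> mG DG1 mBad; set p := fine _.
have pE : tuple_prob D L Bad = p%:E by rewrite fineK // fin_num_measure.
have msel (s : 'I_L -> 'I_M) : measurable (tuple_select s @^-1` Bad).
  by rewrite -[X in measurable X]setTI; exact: measurable_tuple_select.
have mbox : measurable (box (fun _ : 'I_M => Good)) by exact: measurable_box.
apply: (exists_le_integral_nat (P := tuple_prob D M) mbox).
- by rewrite tuple_prob_box // big1.
- rewrite (_ : (fun y => _) = fun y => \sum_(s <- injections M L) \1_(tuple_select s @^-1` Bad) y).
    by apply: measurable_sum => s; exact: measurable_indic.
  by apply/funext => y; exact: size_bad_selectionsE.
under eq_integral do rewrite size_bad_selectionsE -sumEFin.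
rewrite ge0_integral_sum //; last first.
  by move=> s; apply/measurable_EFinP; exact: measurable_indic.
have -> : ((size (injections M L))%:R * p)%:E = \sum_(s <- injections M L) p%:E.
  by rewrite sumEFin big_const_seq count_predT iter_addr_0 mulr_natl.
rewrite big_seq [leRHS]big_seq; apply: lee_sum => s.
rewrite mem_injections => /injectiveP s_inj.
rewrite integral_indic // -pE -(tuple_prob_select D s_inj mBad).
by apply: le_measure; rewrite ?inE //; exact: measurableI.
Qed.

End first_moment.

Section random_coding.
Context d (T : measurableType d) (R : realType) (D : probability T R).
Variables (L : nat) (L0 : (0 < L)%N) (Good : set T) (Bad : set (L.-tuple T)).
Hypotheses (mGood : measurable Good) (DGood : D Good = 1%E) (mBad : measurable Bad).
Hypothesis Bad_const : forall v : T, Bad [tuple v | _ < L].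

Lemma exists_expurgated_code M : exists C : seq T,
  [/\ uniq C, forall v, v \in C -> Good v,
      forall x : 'I_L -> T, injective x -> (forall k, x k \in C) -> ~ Bad [tuple x k | k < L]
    & M%:R - (M ^ L)%:R * fine (tuple_prob D L Bad) <= (L.-1 * size C)%:R].
Proof.
have [y y_good few_bad] := exists_few_bad_selections M mGood DGood mBad.
exists (expurgated L0 Bad y); split.
- exact: undup_uniq.
- by move=> v; rewrite mem_undup => /mapP[i _ ->].
- exact: expurgated_not_bad.
have p0 : 0 <= fine (tuple_prob D L Bad) by apply/fine_ge0/measure_ge0.
have bad_le : (size (bad_selections Bad y))%:R <= (M ^ L)%:R * fine (tuple_prob D L Bad) :> R.
  by rewrite (le_trans few_bad) // ler_wpM2r // ler_nat size_injections.
have : M%:R <= (L.-1 * size (expurgated L0 Bad y))%:R + (size (bad_selections Bad y))%:R :> R.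
  rewrite -natrD ler_nat (leq_trans (size_kept_ge L0 Bad y)) // leq_add2r.
  exact: size_kept_le.
lra.
Qed.

End random_coding.

(** * Chebyshev radius *)

Section chebyshev_radius.
Context (R : realType) (n L : nat).
Notation V := (n.-tuple R).
Implicit Types (x : 'I_L -> V) (y : V).

Lemma sqdist_ge0 (a b : V) : 0 <= sqdist a b.
Proof. by apply: sumr_ge0 => j _; exact: sqr_ge0. Qed.

Lemma sqdistxx (a : V) : sqdist a a = 0.
Proof. by rewrite /sqdist big1 // => j _; rewrite subrr expr0n. Qed.

Definition maxsqdist x y := \big[Num.max/0]_(i < L) sqdist (x i) y.

Lemma maxsqdist_ge0 x y : 0 <= maxsqdist x y.
Proof.
rewrite /maxsqdist; elim/big_ind: _ => // [a b a0 b0|i _]; first by rewrite le_max a0.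
exact: sqdist_ge0.
Qed.

Lemma maxsqdist_le x y c : 0 <= c -> (forall i, sqdist (x i) y <= c) -> maxsqdist x y <= c.
Proof. by move=> c0 x_near; apply: bigmax_le => // i _; exact: x_near. Qed.

Lemma sqdist_le_maxsqdist x y i : sqdist (x i) y <= maxsqdist x y.
Proof. by rewrite /maxsqdist (bigD1 i) //= le_max lexx. Qed.

Lemma rad2_le_maxsqdist x y : rad2 x <= maxsqdist x y.
Proof.
apply: ge_inf; last by exists y.
by exists 0 => _ [y' _ <-]; exact: maxsqdist_ge0.
Qed.

Lemma rad2_const (v : V) : rad2 (fun _ : 'I_L => v) <= 0.
Proof.
apply: le_trans (rad2_le_maxsqdist _ v) _.
by apply: maxsqdist_le => // i; rewrite sqdistxx.
Qed.

Lemma exists_maxsqdist_lt x e : rad2 x < e -> exists y, maxsqdist x y < e.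
Proof.
have nonempty : [set maxsqdist x y | y in [set: V]] !=set0.
  by exists (maxsqdist x (origin R n)), (origin R n).
by move=> /(inf_lt nonempty) [_ [y _ <-]]; exists y.
Qed.

Lemma avgrad2_const (v : V) : avgrad2 (fun _ : 'I_L => v) = 0.
Proof.
rewrite /avgrad2; have [->|L_gt0] := posnP L; first by rewrite big_ord0 mulr0.
have -> : centroid (fun _ : 'I_L => v) = v.
  apply: eq_from_tnth => j; rewrite tnth_mktuple sumr_const card_ord -[tnth v j *+ L]mulr_natl.
  by rewrite mulKf // pnatr_eq0 -lt0n.
by rewrite big1 ?mulr0 // => i _; exact: sqdistxx.
Qed.

End chebyshev_radius.

Lemma sqr_sub_le (R : realFieldType) (a u t : R) : 0 <= u -> u <= t -> t <= 1 ->
  (a - u) ^+ 2 <= a ^+ 2 + t * (2 * `|a| + 1).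
Proof.
move=> u0 ut t1.
have p1 : 0 <= (`|a| + a) * u by rewrite mulr_ge0 // -lerBlDr sub0r -normrN ler_norm.
have p2 : 0 <= (t - u) * `|a| by rewrite mulr_ge0 // subr_ge0.
have p3 : 0 <= u * (1 - u) by rewrite mulr_ge0 // subr_ge0 (le_trans ut t1).
nra.
Qed.

Section rational_centers.
Context (R : realType) (n L : nat).
Notation V := (n.-tuple R).
Implicit Types (x : 'I_L -> V) (y : V).

Definition ratv (q : n.-tuple rat) : V := [tuple ratr (tnth q j) | j < n].

Lemma sqdist_shift (a y y' : V) t : 0 <= t <= 1 ->
  (forall j, tnth y j <= tnth y' j <= tnth y j + t) ->
  sqdist a y' <= sqdist a y + t * \sum_(j < n) (2 * `|tnth a j - tnth y j| + 1).
Proof.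
move=> /andP[t0 t1] yy'; rewrite mulr_sumr -big_split /=; apply: ler_sum => j _.
have /andP[y_le y'_le] := yy' j.
rewrite (_ : _ - tnth y' j = (tnth a j - tnth y j) - (tnth y' j - tnth y j)).
  by apply: sqr_sub_le; rewrite ?subr_ge0 // lerBlDl.
by rewrite opprB addrA subrK.
Qed.

Lemma exists_ratv_maxsqdist x y e : 0 < e ->
  exists q, maxsqdist x (ratv q) <= maxsqdist x y + e.
Proof.
move=> e0; pose W i := \sum_(j < n) (2 * `|tnth (x i) j - tnth y j| + 1).
have W0 i : 0 <= W i by apply: sumr_ge0 => j _; rewrite addr_ge0 ?mulr_ge0.
pose K := 1 + \sum_(i < L) W i.
have K0 : 0 < K by rewrite ltr_wpDr ?ltr01 // sumr_ge0.
have WK i : W i <= K.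
  rewrite /K (bigD1 i) //= addrCA lerDl.
  exact: addr_ge0 ler01 (sumr_ge0 _ (fun j _ => W0 j)).
pose t := Num.min 1 (e / K).
have t0 : 0 < t by rewrite lt_min ltr01 divr_gt0.
have tK : t * K <= e by rewrite -ler_pdivlMr // ge_min lexx orbT.
have /choice[q q_near] j : exists r : rat, ratr r \in `]tnth y j, tnth y j + t[.
  by apply: rat_in_itvoo; rewrite ltrDl.
exists (mktuple q); apply: maxsqdist_le => [|i]; first by rewrite addr_ge0 ?maxsqdist_ge0 ?ltW.
apply: le_trans (@sqdist_shift (x i) y (ratv (mktuple q)) t _ _) _.
- by rewrite ltW //= ge_min lexx.
- move=> j; have := q_near j; rewrite /ratv !tnth_mktuple in_itv /= => /andP[lo hi].
  by rewrite !ltW.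
- apply: lerD; first exact: sqdist_le_maxsqdist.
  by apply: le_trans tK; rewrite ler_pM2l //; exact: WK.
Qed.

End rational_centers.

Section measurability.
Context d (T : measurableType d) (R : realType).
Implicit Types (f g : T -> R).

Lemma measurable_le_cst f c : measurable_fun setT f -> measurable [set x | f x <= c].
Proof.
move=> mf; rewrite -[X in measurable X]setTI.
by apply: measurable_fun_le => //; exact: measurable_cst.
Qed.

Lemma measurable_lt_cst f c : measurable_fun setT f -> measurable [set x | f x < c].
Proof.
move=> mf; rewrite (_ : [set x | _] = f @^-1` `]-oo, c[).
  by rewrite -[X in measurable X]setTI; exact: mf.
by rewrite predeqE => x; rewrite /= in_itv.
Qed.

Lemma measurable_fun_bigmax (I : Type) (s : seq I) (F : I -> T -> R) :
  (forall i, measurable_fun setT (F i)) ->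
  measurable_fun setT (fun x => \big[Num.max/0]_(i <- s) F i x).
Proof.
move=> mF; elim: s => [|i s IH].
  by under eq_fun do rewrite big_nil; exact: measurable_cst.
by under eq_fun do rewrite big_cons; exact: measurable_maxr.
Qed.

Lemma measurable_sqdist n (u v : T -> n.-tuple R) :
  measurable_fun setT u -> measurable_fun setT v ->
  measurable_fun setT (fun x => sqdist (u x) (v x)).
Proof.
move=> mu mv; apply: measurable_sum => j; apply: measurable_funX.
by apply: measurable_funB; apply: measurableT_comp (measurable_tnth j) _.
Qed.

End measurability.

Section radius_measurability.
Context (R : realType) (n L : nat).
Notation V := (n.-tuple R).
Notation Z := (L.-tuple V).

(* rad2 is an infimum over all centres; approximating them by rational centres
   makes its sublevel sets countable intersections of countable unions. *)
Lemma rad2_leP (x : 'I_L -> V) c :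
  rad2 x <= c <-> forall k : nat, exists q, maxsqdist x (ratv R q) < c + k.+1%:R^-1.
Proof.
split=> [rad_le k|approx_c].
  have e0 : 0 < k.+1%:R^-1 / 2 :> R by rewrite divr_gt0 // invr_gt0.
  have [y y_lt] : exists y, maxsqdist x y < c + k.+1%:R^-1 / 2.
    by apply: exists_maxsqdist_lt; apply: le_lt_trans rad_le _; rewrite ltrDl.
  have [q q_le] := exists_ratv_maxsqdist x y e0.
  exists q; apply: le_lt_trans q_le _.
  by rewrite [X in _ < c + X](splitr k.+1%:R^-1) addrA ltrD2r.
apply/ler_addgt0Pr => e e0; have [q q_lt] := approx_c (Num.truncn e^-1).
apply: le_trans (rad2_le_maxsqdist x (ratv R q)) _; apply: le_trans (ltW q_lt) _.
rewrite lerD2l -[leRHS]invrK lef_pV2 ?posrE ?invr_gt0 //.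
by rewrite ltW // truncnS_gt.
Qed.

Lemma measurable_rad2_le c : measurable [set z : Z | rad2 (fun i => tnth z i) <= c].
Proof.
pose S k m := if @unpickle (n.-tuple rat) m is Some q
  then [set z : Z | maxsqdist (fun i => tnth z i) (ratv R q) < c + k.+1%:R^-1] else set0.
rewrite (_ : [set z | _] = \bigcap_(k in setT) \bigcup_(m in setT) S k m).
  apply: bigcap_measurableType => k _; apply: bigcup_measurable => m _.
  rewrite /S; case: unpickle => // q; apply: measurable_lt_cst.
  apply: measurable_fun_bigmax => i; apply: measurable_sqdist => //.
  exact: measurable_tnth.
rewrite predeqE => z /=; rewrite rad2_leP; split=> [approx_c k _|approx_c k].
  by have [q q_lt] := approx_c k; exists (pickle q) => //; rewrite /S pickleK.
by have [m _] := approx_c k I; rewrite /S; case: unpickle => // q; exists q.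
Qed.

Lemma measurable_avgrad2_le c : measurable [set z : Z | avgrad2 (fun i => tnth z i) <= c].
Proof.
apply: measurable_le_cst; apply: measurable_funM => //.
apply: measurable_sum => i; apply: measurable_sqdist; first exact: measurable_tnth.
apply/measurable_fun_tnthP => j.
rewrite (_ : _ \o _ = fun z : Z => L%:R^-1 * \sum_(k < L) tnth (tnth z k) j).
  apply: measurable_funM => //; apply: measurable_sum => k.
  exact: measurableT_comp (measurable_tnth j) (measurable_tnth k).
by apply/funext => z /=; rewrite tnth_mktuple.
Qed.

Lemma measurable_eball (y : V) r : measurable (eball y r).
Proof. by apply: measurable_le_cst; exact: measurable_sqdist. Qed.

End radius_measurability.

(** * Codes and rates *)

Section decodable_codes.
Context (R : realType) (n L : nat) (P N : R).
Notation V := (n.-tuple R).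

Lemma list_decodable_rad2 (C : seq V) : 0 <= N -> in_power_ball P C ->
  (forall x : 'I_L -> V, injective x -> (forall k, x k \in C) -> n%:R * N < rad2 x) ->
  list_decodable P N L C.
Proof.
move=> N0 powC rad_gt; split=> // y; rewrite leqNgt; apply/negP => many.
set C' := [seq v <- C | v \in eball y (Num.sqrt (n%:R * N))].
have [x x_inj x_C'] : exists2 x : 'I_L -> V, injective x & forall k, x k \in C'.
  apply: exists_injective_mem; first by rewrite filter_uniq //; case: powC.
  by rewrite size_filter (leq_trans (leqSpred L)) // -subn1.
have := rad_gt x x_inj (fun k => mem_subseq (filter_subseq _ _) (x_C' k)).
rewrite ltNge => /negP; apply; apply: le_trans (rad2_le_maxsqdist x y) _.
apply: maxsqdist_le => [|k]; first by rewrite mulr_ge0.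
have := x_C' k; rewrite mem_filter => /andP[/set_mem + _].
by rewrite /eball /= sqr_sqrtr // mulr_ge0.
Qed.

Lemma power_ball_singleton : 0 <= P -> in_power_ball P [:: origin R n].
Proof.
move=> P0; split=> // v; rewrite inE => /eqP ->.
by rewrite /eball /= sqdistxx sqr_ge0.
Qed.

Lemma list_decodable_singleton : 0 <= P -> (1 < L)%N ->
  list_decodable P N L [:: origin R n].
Proof.
move=> P0 L1; split=> [|y]; first exact: power_ball_singleton.
by rewrite /= addn0 subn1; case: (_ \in _) => //; rewrite -ltnS prednK // ltnW.
Qed.

Lemma avg_list_decodable_singleton : 0 <= P -> (1 < L)%N ->
  avg_list_decodable P N L [:: origin R n].
Proof.
move=> P0 L1; split=> [|x x_inj x_0]; first exact: power_ball_singleton.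
have x_origin k : x k = origin R n by apply/eqP; rewrite -mem_seq1 x_0.
by have /x_inj/(congr1 val) := etrans (x_origin (Ordinal (ltnW L1))) (esym (x_origin (Ordinal L1))).
Qed.

End decodable_codes.

Section iid_codes.
Context (R : realType) (n L : nat) (L0 : (0 < L)%N) (P : R).
Notation V := (n.-tuple R).
Variable D : probability V R.
Hypothesis D_ball : D (eball (origin R n) (Num.sqrt (n%:R * P))) = 1%E.
Context d (Omega : measurableType d) (Pr : probability Omega R) (X : 'I_L -> Omega -> V).
Hypothesis X_iid : iid_with_law Pr D X.

Lemma exists_code_above_sublevel (phi : ('I_L -> V) -> R) c :
  measurable [set z : L.-tuple V | phi (fun i => tnth z i) <= c] ->
  (forall v, phi (fun _ => v) <= c) -> forall M,
  exists C, [/\ in_power_ball P C,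
    forall x, injective x -> (forall k, x k \in C) -> c < phi x
  & M%:R - (M ^ L)%:R * fine (Pr [set w | phi (fun i => X i w) <= c]) <= (L.-1 * size C)%:R].
Proof.
set Bad := [set z | _] => mBad phi_const M.
have tnth_fun (x : 'I_L -> V) : (fun i => tnth [tuple x k | k < L] i) = x.
  by apply/funext => i; rewrite tnth_mktuple.
have Bad_const v : Bad [tuple v | _ < L] by rewrite /Bad /= (tnth_fun (fun _ => v)).
have [C [C_uniq C_ball C_good C_size]] :=
  exists_expurgated_code L0 (measurable_eball _ _) D_ball mBad Bad_const M.
exists C; split=> [|x x_inj x_C|].
- by split.
- by have := C_good x x_inj x_C; rewrite /Bad /= tnth_fun ltNge => /negP.
have [mX [lawX indepX]] := X_iid.
suff -> : [set w | phi (fun i => X i w) <= c] = (fun w => [tuple X i w | i < L]) @^-1` Bad.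
  by rewrite (iid_tuple_law mX lawX indepX mBad).
by rewrite predeqE => w; rewrite /Bad /= tnth_fun.
Qed.

End iid_codes.

Lemma limn_esup_ge (R : realType) (u : (\bar R)^nat) x :
  (\forall n \near \oo, x <= u n)%E -> (x <= limn_esup u)%E.
Proof.
move=> ux; rewrite /limn_esup limf_esupE; apply/ereal_infP => _ [V oV <-].
have [m [Vm xm]] := filter_ex (filterI oV ux).
by apply: le_trans xm _; apply: ereal_sup_ubound; exists m.
Qed.

Section rate_and_exponent.
Context (R : realType) (n : nat) (n0 : (0 < n)%N).

Lemma rate_ge (C : seq (n.-tuple R)) r :
  expR (n%:R * r) <= (size C)%:R -> (r%:E <= rate C)%E.
Proof.
move=> size_ge; have C0 : 0 < (size C)%:R :> R by apply: lt_le_trans size_ge; exact: expR_gt0.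
rewrite /rate; case: eqP => [C_nil|_]; first by move: C0; rewrite C_nil ltxx.
rewrite lee_fin ler_pdivlMl ?ltr0n //.
by rewrite -[leLHS]expRK ler_ln ?posrE ?expR_gt0.
Qed.

Lemma expo_gt (x : \bar R) c : 0 <= fine x ->
  (c%:E < expo n x)%E -> fine x < expR (- (n%:R * c)).
Proof.
rewrite /expo; case: eqP => [-> _ _|x_neq0 x_ge0]; first exact: expR_gt0.
have x_gt0 : 0 < fine x by rewrite lt_neqAle eq_sym x_ge0 andbT; apply/eqP.
have nR : 0 < n%:R :> R by rewrite ltr0n.
rewrite lte_fin -(ltr_pM2l nR) mulrN mulVKf ?gt_eqF // ltrNr.
by move=> ln_lt; rewrite -[fine x]lnK ?posrE // ltr_expR.
Qed.

End rate_and_exponent.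

Section capacity_lower_bound.
Context (R : realType) (L : nat) (L2 : (1 < L)%N).
Variables (good : forall n, seq (n.-tuple R) -> Prop) (p : nat -> R).
Hypothesis p_ge0 : forall n, 0 <= p n.
Hypothesis good_nonempty : forall n, exists2 C, @good n C & (0 < size C)%N.
Hypothesis good_code : forall n M,
  exists2 C, @good n C & M%:R - (M ^ L)%:R * p n <= (L.-1 * size C)%:R.

Let Lr : R := L.-1%:R.
Let Lr_ge1 : 1 <= Lr. Proof. by rewrite ler1n -ltnS prednK // ltnW. Qed.
Let LrE : L%:R = Lr + 1. Proof. by rewrite natr1 prednK // ltnW. Qed.

Let rate_le_best n (C : seq (n.-tuple R)) :
  @good n C -> (rate C <= ereal_sup [set rate C | C in [set C | @good n C]])%E.
Proof. by move=> gC; apply: ereal_sup_ubound; exists C. Qed.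

(* Drawing M ~ 2(L-1)u codewords makes the expected number M^L p of bad
   L-tuples at most M/2, leaving more than u codewords after expurgation. *)
Lemma large_good_code n u : 1 <= u -> (2 * L%:R * u) ^+ L.-1 * p n <= 1 / 2 ->
  exists2 C, @good n C & u <= (size C)%:R.
Proof.
move=> u_ge1 small_p; have u0 : 0 <= u by exact: le_trans u_ge1.
have Lu0 : 0 <= 2 * Lr * u by rewrite !mulr_ge0 // (le_trans _ Lr_ge1).
set M := (Num.truncn (2 * Lr * u)).+1.
have M_gt : 2 * Lr * u < M%:R by exact: truncnS_gt.
have M_le : M%:R <= 2 * L%:R * u.
  rewrite /M -natr1 LrE; have := truncn_le (2 * Lr * u); rewrite Lu0; lra.
have ML_le : (M ^ L)%:R * p n <= M%:R / 2.
  rewrite natrX -(prednK (ltnW L2)) exprS -mulrA ler_pM2l ?ltr0n // -div1r.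
  apply: le_trans small_p; rewrite ler_wpM2r // lerXn2r ?nnegrE //.
  by rewrite !mulr_ge0.
have [C gC C_size] := good_code n M; exists C => //.
have : 2 * Lr * u < 2 * Lr * (size C)%:R.
  by apply: lt_le_trans M_gt _; rewrite natrM -/Lr in C_size; lra.
by rewrite ltr_pM2l ?mulr_gt0 ?(lt_le_trans _ Lr_ge1) // => /ltW.
Qed.

Lemma eventually_rate_ge r r1 : 0 < r -> r < r1 ->
  (\forall n \near \oo, p n < expR (- (n%:R * (Lr * r1)))) ->
  \forall n \near \oo, (r%:E <= ereal_sup [set rate C | C in [set C | @good n C]])%E.
Proof.
move=> r_gt0 rr1 p_small; pose A : R := (2 * L%:R) ^+ L.-1.
have A0 : 0 < A by rewrite exprn_gt0 // mulr_gt0 // ltr0n ltnW.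
have gap_gt0 : 0 < Lr * (r1 - r) by rewrite mulr_gt0 ?subr_gt0 // (lt_le_trans _ Lr_ge1).
have n_large : \forall n \near \oo, ln (2 * A) / (Lr * (r1 - r)) < n%:R.
  exact: nbhs_infty_gtr.
near=> n.
have n0 : (0 < n)%N by near: n; exact: nbhs_infty_gt.
have gap : ln (2 * A) < n%:R * (Lr * (r1 - r)).
  by rewrite -ltr_pdivrMr //; near: n; exact: n_large.
have p_lt : p n < expR (- (n%:R * (Lr * r1))) by near: n; exact: p_small.
have small_p : (2 * L%:R * expR (n%:R * r)) ^+ L.-1 * p n <= 1 / 2.
  rewrite exprMn -expRM_natl -/Lr -/A.
  apply: le_trans (_ : A * expR (- ln (2 * A)) <= _); last first.
    by rewrite expRN lnK ?posrE ?mulr_gt0 // invfM mulrCA divff ?gt_eqF // mulr1 div1r.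
  rewrite -mulrA ler_pM2l //; apply: le_trans (ler_wpM2l (expR_ge0 _) (ltW p_lt)) _.
  rewrite -expRD ler_expR (_ : _ + _ = - (n%:R * (Lr * (r1 - r)))); last by ring.
  by rewrite lerN2 ltW.
have u_ge1 : 1 <= expR (n%:R * r) by rewrite -expR0 ler_expR mulr_ge0 // ltW.
have [C gC C_size] := large_good_code u_ge1 small_p.
by apply: le_trans (rate_le_best gC); exact: rate_ge.
Unshelve. all: by end_near.
Qed.

Lemma limn_esup_rate_ge (E : R) :
  (exists l, (fun n => expo n (p n)%:E) @ \oo --> l /\ (E%:E <= l)%E) ->
  ((E / (L%:R - 1))%:E <= limn_esup (fun n => ereal_sup [set rate C | C in [set C | @good n C]]))%E.
Proof.
move=> [l [p_cvg El]]; rewrite LrE addrK.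
have Lr0 : 0 < Lr by exact: lt_le_trans Lr_ge1.
apply/lee_subgt0Pr => e e0; rewrite -EFinB; apply: limn_esup_ge.
have [r_le0|r_gt0] := leP (E / Lr - e) 0.
  near=> n; have [C gC C0] := good_nonempty n.
  apply: le_trans (rate_le_best gC); apply: rate_ge; first by near: n; exact: nbhs_infty_gt.
  by rewrite (le_trans _ (_ : 1 <= _)) ?ler1n // -expR0 ler_expR mulr_ge0_le0.
apply: (eventually_rate_ge (r1 := E / Lr - e / 2)) => //; first lra.
have expo_gt_r1 : \forall n \near \oo, ((Lr * (E / Lr - e / 2))%:E < expo n (p n)%:E)%E.
  apply: p_cvg (open_ereal_gt' _); apply: lt_le_trans El.
  by rewrite lte_fin mulrBr mulrCA divff ?gt_eqF // mulr1 ltrBlDr ltrDl mulr_gt0 ?divr_gt0.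
near=> n; have n0 : (0 < n)%N by near: n; exact: nbhs_infty_gt.
apply: (expo_gt n0 (x := (p n)%:E)); first exact: p_ge0.
by near: n; exact: expo_gt_r1.
Unshelve. all: by end_near.
Qed.

End capacity_lower_bound.

Theorem mainTheorem4 (R : realType) (P N : R) (L : nat)
  (hP : 0 < P) (hN : 0 < N) (hL : (2 <= L)%N)
  (D : forall n : nat, probability (n.-tuple R) R)
  (hD : forall n : nat, D n (eball (origin R n) (Num.sqrt (n%:R * P))) = 1%E)
  (d : nat -> measure_display) (Omega : forall n : nat, measurableType (d n))
  (Pr : forall n : nat, probability (Omega n) R)
  (X : forall n : nat, 'I_L -> Omega n -> n.-tuple R)
  (hX : forall n : nat, iid_with_law (Pr n) (D n) (X n))
  (E Ebar : R) :
  ((exists l : \bar R,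
      (fun n => expo n (Pr n [set w | rad2 (fun i => X n i w) <= n%:R * N]))
        @ \oo --> l /\ (E%:E <= l)%E) ->
     ((E / (L%:R - 1))%:E <= Cap P N L)%E) /\
  ((exists l : \bar R,
      (fun n => expo n (Pr n [set w | avgrad2 (fun i => X n i w) <= n%:R * N]))
        @ \oo --> l /\ (Ebar%:E <= l)%E) ->
     ((Ebar / (L%:R - 1))%:E <= Cap_avg P N L)%E).
Proof.
have L0 : (0 < L)%N by exact: ltnW.
have nN_ge0 n : 0 <= n%:R * N by rewrite mulr_ge0 // ltW.
split=> [E_le|Ebar_le].
- apply: (limn_esup_rate_ge hL (good := fun n C => list_decodable P N L C) _ _ _ E_le).
  + by move=> n; exact/fine_ge0/measure_ge0.
  + by move=> n; exists [:: origin R n]; first exact: list_decodable_singleton (ltW hP) hL.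
  + move=> n M; have rad_const (v : n.-tuple R) : rad2 (fun _ : 'I_L => v) <= n%:R * N.
      exact: le_trans (rad2_const L v) (nN_ge0 n).
    have [C [C_ball C_far C_size]] :=
      exists_code_above_sublevel L0 (hD n) (hX n) (measurable_rad2_le _) rad_const M.
    by exists C => //; exact: list_decodable_rad2 (ltW hN) C_ball C_far.
- apply: (limn_esup_rate_ge hL (good := fun n C => avg_list_decodable P N L C) _ _ _ Ebar_le).
  + by move=> n; exact/fine_ge0/measure_ge0.
  + by move=> n; exists [:: origin R n]; first exact: avg_list_decodable_singleton (ltW hP) hL.
  + move=> n M; have avg_const (v : n.-tuple R) : avgrad2 (fun _ : 'I_L => v) <= n%:R * N.
      by rewrite avgrad2_const.
    have [C [C_ball C_far C_size]] :=
      exists_code_above_sublevel L0 (hD n) (hX n) (measurable_avgrad2_le _) avg_const M.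
    by exists C.
Qed.
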